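(* Let $n\ge 2$ and let $f:\{0,1\}^n\to\{0,1\}$ be written in the form $f(x_1,\dots,x_n)=\bigoplus_{I\subseteq\{1,\dots,n\}} a_I\bigwedge_{i\in I}x_i$ with $a_I\in\{0,1\}$. Let $\mathcal J=\{I\subseteq\{1,\dots,n\}: a_I=1,\ |I|\ge 2\}$ and suppose $n_{\mathcal J}=1$. Then the number $N^{scratch}_{comm}$ of one-way communication channels needed to simulate the full-correlation box associated to $f$ from scratch is $$N^{scratch}_{comm}=\Big|\bigcup_{I\in\mathcal J} I\Big|-1.$$
   Context: The full-correlation box associated to a Boolean function $f$ of $n$ inputs is the $n$-partite box with binary inputs $\vec x=(x_1,\dots,x_n)$ and binary outputs $\vec a=(a_1,\dots,a_n)$ given by $P(\vec a\mid\vec x)=2^{-(n-1)}$ if $\bigoplus_i a_i=f(\vec x)$ and $0$ otherwise. $n_{\mathcal J}$ denotes the maximal number of blocks in a partition $\{J_1,\dots,J_{n_{\mathcal J}}\}$ of $\mathcal J$ such that $A\cap B=\emptyset$ whenever $A\in J_i$, $B\in J_j$, $i\ne j$ (so $n_{\mathcal J}=1$ means the sets in $\mathcal J$ are connected under the relation of having nonempty intersection). Simulating a box from scratch means that the $n$ parties, using only shared randomness, local operations, and a set of one-way classical communication channels (each an ordered pair of parties, usable arbitrarily often), produce outputs with exactly the box's conditional distribution; $N^{scratch}_{comm}$ is the number of such channels required. *)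

From HB Require Import structures.
From mathcomp Require Import all_boot all_order all_algebra.
From mathcomp Require Import reals.
Set Implicit Arguments. Unset Strict Implicit. Unset Printing Implicit Defensive.
Import Order.TTheory GRing.Theory Num.Theory.
Local Open Scope ring_scope.

(* Parties are 'I_n; input/output strings are {ffun 'I_n -> bool}. *)
Notation bits n := {ffun 'I_n -> bool}.

Definition anf n (c : {set 'I_n} -> bool) (x : bits n) : bool :=
  \big[xorb/false]_(I : {set 'I_n} | c I) [forall i in I, x i].

Definition fc_box (R : realType) n (g : bits n -> bool) (a x : bits n) : R :=
  if (\big[xorb/false]_(i < n) a i) == g x then (2 ^+ n.-1)^-1 else 0.

Definition channel_set n (C : {set 'I_n * 'I_n}) : Prop :=
  forall p, p \in C -> p.1 != p.2.

Definition reaches n (C : {set 'I_n * 'I_n}) (j i : 'I_n) : bool :=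
  connect (fun u v => (u, v) \in C) j i.

Notation strategy n := {ffun 'I_n -> {ffun bits n -> bool}}.

Definition implementable n (C : {set 'I_n * 'I_n}) (s : strategy n) : Prop :=
  forall (i : 'I_n) (x y : bits n),
    (forall j, reaches C j i -> x j = y j) -> s i x = s i y.

(* Simulation from scratch: shared randomness = a probability distribution w
   over implementable deterministic strategies (local randomness absorbed). *)
Definition simulates (R : realType) n (C : {set 'I_n * 'I_n})
    (P : bits n -> bits n -> R) : Prop :=
  exists w : strategy n -> R,
    (forall s, 0 <= w s) /\ (\sum_s w s = 1) /\
    (forall s, w s != 0 -> implementable C s) /\
    (forall a x : bits n,
        \sum_s w s * (if [forall i, s i x == a i] then 1 else 0) = P a x).

Definition N_scratch_comm_eq (R : realType) n (P : bits n -> bits n -> R)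
    (k : nat) : Prop :=
  (exists C, channel_set C /\ #|C| = k /\ simulates C P) /\
  (forall C, channel_set C -> simulates C P -> (k <= #|C|)%N).

Definition Jfam n (c : {set 'I_n} -> bool) : {set {set 'I_n}} :=
  [set I | c I && (1 < #|I|)%N].

Definition blocks_separated n (P : {set {set {set 'I_n}}}) : bool :=
  [forall B1 in P, forall B2 in P, (B1 != B2) ==>
     [forall A in B1, forall B in B2, [disjoint A & B]]].

Definition nJ n (J : {set {set 'I_n}}) : nat :=
  \max_(P : {set {set {set 'I_n}}} | partition P J && blocks_separated P) #|P|.

From HB Require Import structures.
From mathcomp Require Import all_boot all_order all_algebra.
From mathcomp Require Import reals.
Set Implicit Arguments. Unset Strict Implicit. Unset Printing Implicit Defensive.
Import Order.TTheory GRing.Theory Num.Theory.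
Local Open Scope ring_scope.

(* Lower bound: a simulation contains a deterministic strategy, implementable
   with the channels C, whose output parity is f.  The ANF coefficient a_I of a
   Boolean function is its parity over the inputs supported in I, and it
   vanishes when the function ignores a variable of I; so every monomial of f
   is seen by a single party, and the variables of each I in J lie in one
   connected component of the undirected channel graph.  As n_J = 1 these
   components glue together, so U = \bigcup J is connected, and m connected
   vertices need m - 1 edges (a rank argument on the incidence matrix).
   Upper bound: every party of U sends its input to a root r in U; the parties
   mask their linear terms with shared random bits, and r outputs the rest of
   f plus the parity of the masks, so each consistent output string arises
   from exactly 2 of the 2^n shared random strings. *)

Definition linked n (C : {set 'I_n * 'I_n}) : rel 'I_n :=
  fun u v => ((u, v) \in C) || ((v, u) \in C).

Lemma linked_sym n (C : {set 'I_n * 'I_n}) : symmetric (linked C).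
Proof. by move=> u v; rewrite /linked orbC. Qed.

Section IncidenceRank.
Variables (n : nat) (C : {set 'I_n * 'I_n}).
Local Notation e j := (delta_mx 0 j : 'rV[rat]_n).

Definition incidence_mx : 'M[rat]_(#|C|, n) :=
  \matrix_(i < #|C|) (e (enum_val i).1 - e (enum_val i).2).

Lemma edge_sub_incidence p :
  p \in C -> (e p.1 - e p.2 <= incidence_mx)%MS.
Proof.
move=> pC; have := row_sub (enum_rank_in pC p) incidence_mx.
by rewrite rowK enum_rankK_in.
Qed.

Lemma connect_linked_sub_incidence u v : connect (linked C) u v ->
  (e u - e v <= incidence_mx)%MS.
Proof.
case/connectP=> p; elim: p u => [|w p IHp] u /=.
  by move=> _ ->; rewrite subrr sub0mx.
case/andP=> uw pw vl.
rewrite -[e u](subrK (e w)) -addrA addmx_sub ?IHp //.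
case/orP: uw => [/edge_sub_incidence // | /edge_sub_incidence wu].
by rewrite -opprB -scaleN1r scalemx_sub.
Qed.

(* The unit rows indexed by X are independent and lie in the span of the
   incidence matrix and one of them, which has rank at most #|C| + 1. *)
Lemma card_connected_le_edges (X : {set 'I_n}) :
  {in X &, forall u v, connect (linked C) u v} -> (#|X| <= #|C|.+1)%N.
Proof.
move=> connX; have [-> | [x0 Xx0]] := set_0Vmem X; first by rewrite cards0.
pose M : 'M[rat]_(#|X|, n) := \matrix_(i < #|X|) e (enum_val i).
have freeM : row_free M.
  apply/row_freeP; exists (\matrix_(j, i) (enum_val i == j)%:R).
  apply/matrixP => i i'; rewrite !mxE (bigD1 (enum_val i)) //= big1 ?addr0.
    by rewrite !mxE /= (@eqxx _ (enum_val i)) mul1r (inj_eq enum_val_inj) eq_sym.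
  by move=> j /negbTE nj; rewrite !mxE nj mul0r.
have sub_span : (M <= incidence_mx + e x0)%MS.
  apply/row_subP => k; rewrite rowK -[e _](subrK (e x0)).
  apply: addmx_sub; last exact: addsmxSr.
  apply: submx_trans (addsmxSl _ _).
  exact/connect_linked_sub_incidence/connX/Xx0/enum_valP.
rewrite -(eqP freeM) -addn1 (leq_trans (mxrankS sub_span)) //.
by rewrite (leq_trans (mxrank_adds_leqif _ _)) // leq_add ?rank_leq_row.
Qed.

End IncidenceRank.

Lemma nJ_gt1_of_separated_split n (J A : {set {set 'I_n}}) :
  A \subset J -> A != set0 -> J :\: A != set0 ->
  {in A & J :\: A, forall I K : {set 'I_n}, [disjoint I & K]} -> (1 < nJ J)%N.
Proof.
set B := J :\: A => AJ A0 B0 sepAB.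
have disjAB : [disjoint A & B].
  by rewrite disjoints_subset; apply/subsetP => I IA; rewrite !inE IA.
have neqAB : A != B.
  by apply: contraNneq B0 => eqAB; move: disjAB; rewrite eqAB -setI_eq0 setIid.
have partAB : partition [set A; B] J.
  have partB : partition [set B] B.
    by rewrite /partition cover1 eqxx trivIset1 inE eq_sym B0.
  by rewrite -(setID J A) (setIidPr AJ); exact: partitionU1.
have sepAB2 : blocks_separated [set A; B].
  apply/forall_inP => B1 B1P; apply/forall_inP => B2 B2P; apply/implyP.
  apply: contraNT => /forall_inP nsep; apply/eqP.
  move: B1P B2P nsep; rewrite !inE => /orP[]/eqP-> /orP[]/eqP-> // nsep; case: nsep.
    by move=> I IA; apply/forall_inP => K KB; apply: sepAB.
  by move=> K KB; apply/forall_inP => I IA; rewrite disjoint_sym; apply: sepAB.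
have := @leq_bigmax_cond _
  (fun P : {set {set {set 'I_n}}} => partition P J && blocks_separated P)
  (fun P => #|P|) _ (introT andP (conj partAB sepAB2)).
by rewrite -/(nJ J) cards2 neqAB.
Qed.

Lemma nJ1_bigcup_clique n (J : {set {set 'I_n}}) (e : rel 'I_n) :
  transitive e -> nJ J = 1%N ->
  (forall I, I \in J -> {in I &, forall u v, e u v}) ->
  {in \bigcup_(I in J) I &, forall u v, e u v}.
Proof.
move=> etr nJ1 cliqueJ u v /bigcupP[Iu Ju uIu] /bigcupP[Iv Jv vIv].
apply: contraT => nuv.
pose A := [set I in J | [exists k in I, e u k]].
suff : (1 < nJ J)%N by rewrite nJ1.
apply: (@nJ_gt1_of_separated_split _ _ A).
- by apply/subsetP => I; rewrite inE => /andP[].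
- apply/set0Pn; exists Iu; rewrite inE Ju; apply/exists_inP; exists u => //.
  exact: (cliqueJ _ Ju _ _ uIu uIu).
- apply/set0Pn; exists Iv; rewrite !inE Jv andbT /=.
  apply/negP => /exists_inP[k kIv uk].
  by rewrite (etr k u v uk (cliqueJ _ Jv _ _ kIv vIv)) in nuv.
move=> I K; rewrite !inE => /andP[JI /exists_inP[k kI uk]] /andP[KnA JK].
rewrite disjoints_subset; apply/subsetP => z zI; rewrite inE.
apply/negP => zK; case/negP: KnA; rewrite JK; apply/exists_inP.
by exists z => //; exact: etr uk (cliqueJ _ JI _ _ kI zI).
Qed.

Lemma big_xorbE (I : Type) (r : seq I) (P : pred I) (F : I -> bool) :
  \big[xorb/false]_(i <- r | P i) F i = \big[addb/false]_(i <- r | P i) F i.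
Proof.
by apply: (big_rec2 eq) => // i b1 b2 _ ->; case: (F i); case: b2.
Qed.

Definition monomial n (K : {set 'I_n}) (x : bits n) : bool := [forall k in K, x k].

Lemma anfE n (c : {set 'I_n} -> bool) (x : bits n) :
  anf c x = \big[addb/false]_(K | c K) monomial K x.
Proof. exact: big_xorbE. Qed.

(* Moebius inversion over GF(2), see anf_coef_anf. *)
Definition anf_coef n (I : {set 'I_n}) (h : bits n -> bool) : bool :=
  \big[addb/false]_(x : bits n | [forall k, x k ==> (k \in I)]) h x.

Definition toggle n (j : 'I_n) (x : bits n) : bits n :=
  [ffun k => if k == j then ~~ x k else x k].

Lemma toggleK n (j : 'I_n) : involutive (toggle j).
Proof. by move=> x; apply/ffunP => k; rewrite !ffunE; case: eqP; rewrite ?negbK. Qed.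

(* Inputs supported in I pair up under toggling j, and h agrees on each pair. *)
Lemma anf_coef_indep n (I S : {set 'I_n}) (h : bits n -> bool) (j : 'I_n) :
  j \in I -> j \notin S ->
  (forall x y : bits n, {in S, x =1 y} -> h x = h y) ->
  anf_coef I h = false.
Proof.
move=> jI jS hS; rewrite /anf_coef (bigID (fun x : bits n => x j)) /=.
rewrite [X in addb _ X](reindex_inj (can_inj (toggleK j))) /=.
set S1 := (X in addb X _).
suff -> : \big[addb/false]_(x | [forall k, toggle j x k ==> (k \in I)] &&
             ~~ toggle j x j) h (toggle j x) = S1 by rewrite addbb.
apply: eq_big => x.
  rewrite ffunE eqxx negbK; congr (_ && _).
  apply: eq_forallb => k; rewrite ffunE.
  by case: eqP => [->|]; rewrite ?jI ?implybT.
move=> _; apply: hS => k kS; rewrite ffunE.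
by case: eqP => // kj; rewrite -kj kS in jS.
Qed.

Lemma anf_coef_monomial n (I K : {set 'I_n}) : anf_coef I (monomial K) = (K == I).
Proof.
have [->|neqKI] := eqVneq K I.
  rewrite /anf_coef (bigD1 [ffun k => k \in I]) /=; last first.
    by apply/forallP => k; rewrite ffunE implybb.
  rewrite big1 ?addbF.
    by apply/forall_inP => k; rewrite ffunE.
  move=> x /andP [/forallP xI nx]; apply/negbTE/forall_inP => xK.
  case/eqP: nx; apply/ffunP => k; rewrite ffunE.
  case kI: (k \in I); first exact: xK.
  by have := xI k; rewrite kI implybF => /negbTE.
have [KI | /subsetPn[k kK kI]] := boolP (K \subset I).
  have /subsetPn[j jI jK] : ~~ (I \subset K).
    by apply: contra neqKI => IK; rewrite eqEsubset KI.
  apply: (anf_coef_indep jI jK) => x y xy; apply: eq_forallb => k.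
  by case: (boolP (k \in K)) => // kK; rewrite xy.
rewrite /anf_coef big1 // => x /forallP xI; apply/negbTE/forall_inP => /(_ k kK) xk.
by have := xI k; rewrite xk (negbTE kI).
Qed.

Lemma anf_coef_anf n (c : {set 'I_n} -> bool) (I : {set 'I_n}) :
  anf_coef I (anf c) = c I.
Proof.
rewrite /anf_coef; under eq_bigr => x _ do rewrite anfE.
rewrite exchange_big /=.
under eq_bigr => K _ do rewrite -/(anf_coef I (monomial K)) anf_coef_monomial.
case cI: (c I).
  by rewrite (bigD1 I) //= eqxx big1 // => K /andP[_ /negbTE].
by rewrite big1 // => K cK; apply/negbTE; apply: contraTneq cK => ->; rewrite cI.
Qed.

Lemma simulates_fc_box_strategy (R : realType) n (C : {set 'I_n * 'I_n})
    (g : bits n -> bool) :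
  simulates C (fc_box R g) ->
  exists2 s : strategy n, implementable C s &
    forall x, \big[addb/false]_(i < n) s i x = g x.
Proof.
case=> w [w_ge0 [w_sum1 [w_impl w_box]]].
have [s ws] : exists s, w s != 0.
  apply/existsP; apply: contraT; rewrite negb_exists => /forallP w0.
  move: w_sum1; rewrite big1 => [/eqP|s _]; first by rewrite eq_sym oner_eq0.
  by apply/eqP; rewrite -[_ == _]negbK w0.
exists s => [|x]; first exact: w_impl.
pose a : bits n := [ffun i => s i x].
have := w_box a x; rewrite /fc_box big_xorbE.
under eq_bigr => i _ do rewrite ffunE.
case: eqP => // _ box0; exfalso.
have : w s <= \sum_t w t * (if [forall i, t i x == a i] then 1 else 0).
  rewrite (bigD1 s) //= ifT ?mulr1; last by apply/forallP => i; rewrite ffunE.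
  rewrite lerDl sumr_ge0 // => t _.
  by rewrite mulr_ge0 //; case: ifP.
by rewrite box0 leNgt lt0r ws w_ge0.
Qed.

Lemma anf_monomial_reachable n (C : {set 'I_n * 'I_n}) (c : {set 'I_n} -> bool)
    (s : strategy n) (K : {set 'I_n}) :
  implementable C s -> (forall x, \big[addb/false]_(i < n) s i x = anf c x) ->
  c K -> exists i, K \subset [set j | reaches C j i].
Proof.
move=> s_impl s_anf cK; apply/existsP; apply: contraT.
rewrite negb_exists => /forallP unseen.
suff : anf_coef K (anf c) = false by rewrite anf_coef_anf cK.
rewrite /anf_coef; under eq_bigr => x _ do rewrite -s_anf.
rewrite exchange_big big1 //= => i _.
have /subsetPn[j jK] := unseen i; rewrite inE => jR.
apply: (@anf_coef_indep _ _ [set j | reaches C j i] _ j); rewrite ?inE //.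
by move=> x y xy; apply: s_impl => k kR; apply: xy; rewrite inE.
Qed.

Lemma N_scratch_lower (R : realType) n (c : {set 'I_n} -> bool)
    (C : {set 'I_n * 'I_n}) :
  nJ (Jfam c) = 1%N -> simulates C (fc_box R (anf c)) ->
  (#|\bigcup_(I in Jfam c) I| - 1 <= #|C|)%N.
Proof.
move=> nJ1 /simulates_fc_box_strategy[s s_impl s_anf].
have reach_linked j i : reaches C j i -> connect (linked C) j i.
  by apply: connect_sub => u v uv; apply: connect1; rewrite /linked uv.
have cliqueJ I : I \in Jfam c -> {in I &, forall u v, connect (linked C) u v}.
  rewrite inE => /andP[cI _] u v uI vI.
  have [i /subsetP seen] := anf_monomial_reachable s_impl s_anf cI.
  have := seen u uI; have := seen v vI; rewrite !inE => /reach_linked vi /reach_linked ui.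
  by apply: connect_trans ui _; rewrite (sym_connect_sym (linked_sym C)).
have := card_connected_le_edges (nJ1_bigcup_clique (@connect_trans _ _) nJ1 cliqueJ).
by rewrite leq_subLR add1n.
Qed.

Lemma simulates_of_uniform_strategies (R : realType) n (C : {set 'I_n * 'I_n})
    (g : bits n -> bool) (strat : bits n -> strategy n) :
  (0 < n)%N -> (forall t, implementable C (strat t)) ->
  (forall x (a : bits n), #|[set t | [forall i, strat t i x == a i]]| =
     if \big[addb/false]_(i < n) a i == g x then 2%N else 0%N) ->
  simulates C (fc_box R g).
Proof.
move=> n_gt0 strat_impl strat_count.
pose k : R := (2 ^+ n)^-1.
have two_n_neq0 : (2 ^+ n : R) != 0 by rewrite expf_neq0 // pnatr_eq0.
exists (fun s => \sum_(t | strat t == s) k); split; [|split; [|split]].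
- by move=> s; apply: sumr_ge0 => t _; rewrite invr_ge0 exprn_ge0.
- rewrite -(partition_big (P := predT) strat predT) //= sumr_const.
  by rewrite card_ffun card_bool card_ord -mulr_natl natrX mulfV.
- move=> s; case: (pickP (fun t => strat t == s)) => [t /eqP <- _|none].
    exact: strat_impl.
  by rewrite big_pred0 ?eqxx.
move=> a x.
transitivity (\sum_s \sum_(t | strat t == s)
    k * (if [forall i, strat t i x == a i] then 1 else 0)).
  by apply: eq_bigr => s _; rewrite mulr_suml; apply: eq_bigr => t /eqP ->.
rewrite -(partition_big (P := predT) strat predT
    (F := fun t => k * (if [forall i, strat t i x == a i] then 1 else 0))) //=.
rewrite -mulr_sumr -big_mkcond /= sumr_const.
have -> : #|[pred t | [forall i, strat t i x == a i]]| =
          #|[set t | [forall i, strat t i x == a i]]|.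
  by apply: eq_card => t; rewrite inE.
rewrite strat_count /fc_box big_xorbE.
case: eqP => _; last by rewrite mulr0n mulr0.
rewrite /k -(prednK n_gt0) exprS invfM mulrAC mulVf ?mul1r //.
by rewrite pnatr_eq0.
Qed.

Section StarStrategy.
Variables (n : nat) (c : {set 'I_n} -> bool) (r : 'I_n) (V : {set 'I_n}).
Hypothesis rV : r \in V.
Hypothesis outside_V_linear : forall K, c K -> ~~ (K \subset V) -> exists i, K = [set i].

Definition linear_term (i : 'I_n) (x : bits n) : bool :=
  [&& i \notin V, c [set i] & x i].

Definition inner_part (x : bits n) : bool :=
  \big[addb/false]_(K | c K && (K \subset V)) monomial K x.

Definition star_strategy (t : bits n) : strategy n :=
  [ffun i => [ffun x =>
    addb (if i == r then addb (\big[addb/false]_(j | j != r) t j) (inner_part x)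
          else t i) (linear_term i x)]].

Lemma anf_inner_linear x :
  anf c x = addb (inner_part x) (\big[addb/false]_i linear_term i x).
Proof.
rewrite anfE (bigID (fun K : {set 'I_n} => K \subset V)) /=; congr addb.
rewrite (reindex_onto (fun i : 'I_n => [set i]) (fun K => odflt r [pick i in K])) /=.
  rewrite [RHS](bigID (fun i => (i \notin V) && c [set i])) /=.
  rewrite [X in addb _ X]big1 ?addbF; last first.
    by move=> i /negbTE notlin; rewrite /linear_term andbA notlin.
  apply: eq_big => i.
    rewrite sub1set; case: pickP => [j|/(_ i)]; last by rewrite inE eqxx.
    rewrite inE => /eqP ->; rewrite eqxx andbT andbC.
    by case: (i \in V); case: (c [set i]).
  case/andP=> /andP [ci]; rewrite sub1set => iV _.
  rewrite /linear_term iV ci /= /monomial.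
  apply/forall_inP/idP => [/(_ i)|xi j]; first by rewrite inE eqxx; apply.
  by rewrite inE => /eqP ->.
move=> K /andP [cK nKV]; have [i ->] := outside_V_linear cK nKV.
case: pickP => [j|/(_ i)]; last by rewrite inE eqxx.
by rewrite inE => /eqP ->.
Qed.

Lemma star_strategy_parity t x :
  \big[addb/false]_(i < n) star_strategy t i x = anf c x.
Proof.
have linear_r : linear_term r x = false by rewrite /linear_term rV.
rewrite anf_inner_linear (bigD1 r) //= [X in _ = addb _ X](bigD1 r) //=.
rewrite !ffunE eqxx linear_r addbF.
have -> : \big[addb/false]_(i | i != r) star_strategy t i x =
    addb (\big[addb/false]_(j | j != r) t j)
         (\big[addb/false]_(i | i != r) linear_term i x).
  by rewrite -big_split; apply: eq_bigr => i ir; rewrite !ffunE (negbTE ir).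
by case: (\big[addb/false]_(j | j != r) t j); case: (inner_part x);
   case: (\big[addb/false]_(i | i != r) linear_term i x).
Qed.

(* Given the output string a, the masks of the parties other than r are forced
   and t r is free. *)
Lemma star_strategy_count x (a : bits n) :
  #|[set t | [forall i, star_strategy t i x == a i]]| =
    if \big[addb/false]_(i < n) a i == anf c x then 2%N else 0%N.
Proof.
case: eqP => parity_a; last first.
  apply/eqP; rewrite cards_eq0; apply/eqP/setP => t; rewrite !inE.
  apply/negbTE/negP => /forallP ta; apply: parity_a.
  by rewrite -(star_strategy_parity t x); apply: eq_bigr => i _; rewrite (eqP (ta i)).
pose mask (b : bool) : bits n :=
  [ffun i => if i == r then b else addb (a i) (linear_term i x)].
have mask_inj : injective mask by move=> b1 b2 /ffunP /(_ r); rewrite !ffunE eqxx.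
have mask_off_r b i : i != r -> star_strategy (mask b) i x = a i.
  by move=> ir; rewrite !ffunE (negbTE ir) -addbA addbb addbF.
suff -> : [set t | [forall i, star_strategy t i x == a i]] = mask @: setT.
  by rewrite card_imset // cardsT card_bool.
apply/setP => t; rewrite inE; apply/forallP/imsetP => [ta | [b _ ->] i].
  exists (t r); first by rewrite inE.
  apply/ffunP => i; rewrite ffunE; case: eqP => [->|/eqP ir] //.
  by have := ta i; rewrite !ffunE (negbTE ir) => /eqP <-; rewrite -addbA addbb addbF.
have [->|ir] := eqVneq i r; last by rewrite mask_off_r.
have := star_strategy_parity (mask b) x; rewrite -parity_a.
rewrite (bigD1 r) //= [X in _ = X](bigD1 r) //=.
rewrite (eq_bigr _ (fun i ir => mask_off_r b i ir)).
by case: (star_strategy (mask b) r x); case: (a r);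
   case: (\big[addb/false]_(i | i != r) a i).
Qed.

Lemma star_strategy_implementable (C : {set 'I_n * 'I_n}) t :
  (forall j, j \in V -> reaches C j r) -> implementable C (star_strategy t).
Proof.
move=> V_reaches_r i x y xy; rewrite !ffunE.
have -> : linear_term i x = linear_term i y.
  by rewrite /linear_term xy // /reaches connect0.
case: eqP => // ir; subst i; congr (addb (addb _ _) _).
apply: eq_bigr => K /andP [_ /subsetP KV]; apply: eq_forallb => k.
by case: (boolP (k \in K)) => //= kK; rewrite xy // V_reaches_r // KV.
Qed.

End StarStrategy.

Lemma anf_monomial_outside_cover n (c : {set 'I_n} -> bool) (V K : {set 'I_n}) :
  \bigcup_(I in Jfam c) I \subset V -> c K -> ~~ (K \subset V) ->
  exists i, K = [set i].
Proof.
move=> UV cK nKV; apply/cards1P; case: ltngtP => // K_gt1.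
  by move: K_gt1 nKV; rewrite ltnS leqn0 cards_eq0 => /eqP ->; rewrite sub0set.
by case/negP: nKV; apply: subset_trans UV; apply: bigcup_sup; rewrite inE cK.
Qed.

Lemma N_scratch_upper (R : realType) n (c : {set 'I_n} -> bool) :
  (0 < n)%N ->
  exists C, channel_set C /\ #|C| = (#|\bigcup_(I in Jfam c) I| - 1)%N /\
    simulates C (fc_box R (anf c)).
Proof.
move=> n_gt0; set U := \bigcup_(I in Jfam c) I.
have [r rU] : exists r : 'I_n, (U != set0) ==> (r \in U).
  have [U0|/set0Pn[j jU]] := eqVneq U set0; first by exists (Ordinal n_gt0); rewrite U0.
  by exists j; rewrite jU implybT.
exists [set (u, r) | u in U :\ r]; split; [|split].
- by move=> p /imsetP[u]; rewrite in_setD1 => /andP[ur _] ->.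
- rewrite card_imset; last by move=> u v [].
  have [->|U_neq0] := eqVneq U set0; first by rewrite set0D cards0.
  by rewrite (cardsD1 r U) (implyP rU U_neq0) add1n subn1.
apply: (@simulates_of_uniform_strategies _ _ _ _ (star_strategy c r (r |: U))) => //.
  move=> t; apply: star_strategy_implementable => j.
  rewrite in_setU1 => /orP[/eqP-> | jU]; first exact: connect0.
  have [->|jr] := eqVneq j r; first exact: connect0.
  by apply: connect1; apply/imsetP; exists j; rewrite // in_setD1 jr jU.
move=> x a; apply: star_strategy_count; first exact: setU11.
by move=> K; apply: anf_monomial_outside_cover; apply: subsetUr.
Qed.

Theorem theorem2 (R : realType) (n : nat) (c : {set 'I_n} -> bool) :
  (2 <= n)%N ->
  nJ (Jfam c) = 1%N ->
  N_scratch_comm_eq (fc_box R (anf c))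
    (#|\bigcup_(I in Jfam c) I| - 1)%N.
Proof.
move=> n_ge2 nJ1; split; first exact: N_scratch_upper (ltnW n_ge2).
by move=> C _; apply: N_scratch_lower.
Qed.
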